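(* Assume (A1) and (A3) hold. Then there exists a constant $C_0>0$ such that $L(\theta)-L(\theta_0)\ge C_0\,\pi_{\mathbb P}^2(\theta,\theta_0)$ for every $\theta=(\alpha,\beta)\in\mathbb R\times L^2([0,1])$.
   Context: Model: $y\in\{0,1\}$ and $X\in L^2([0,1])$, with $y\mid X\sim\mathrm{Bernoulli}(F(\alpha_0+\langle X,\beta_0\rangle))$, where $F(t)=e^t/(1+e^t)$, $\langle u,v\rangle=\int_0^1uv$, and $\theta_0=(\alpha_0,\beta_0)$. $w$ is a non-negative bounded weight function. Loss: $d(y,t)=-y\log F(t)-(1-y)\log(1-F(t))$, $\psi=\rho'$, $G(t)=\int_0^t\psi(-\log u)\,du$, and $$\phi(y,t)=\rho(d(y,t))+G(F(t))+G(1-F(t)).$$ Objective and discrepancy: $$L(\theta)=\mathbb E\big(\phi(y,\alpha+\langle X,\beta\rangle)w(X)\big),$$ $$\pi_{\mathbb P}^2(\theta,\theta_0)=\mathbb E\big(w(X)[F(\alpha+\langle X,\beta\rangle)-F(\alpha_0+\langle X,\beta_0\rangle)]^2\big).$$ Assumptions: (A1) $\rho:[0,\infty)\to\mathbb R$ is bounded and continuously differentiable, with bounded derivative $\psi$, and $\rho(0)=0$. (A3) $\psi\ge0$, and there exist $a\ge\log2$ and $A_0>0$ with $\psi(t)>A_0$ for $0<t<a$. *)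

From HB Require Import structures.
From mathcomp Require Import all_boot all_order all_algebra.
From mathcomp Require Import all_classical all_reals all_analysis.
Set Implicit Arguments. Unset Strict Implicit. Unset Printing Implicit Defensive.
Import Order.TTheory GRing.Theory Num.Theory.
Import numFieldNormedType.Exports.
Local Open Scope classical_set_scope.
Local Open Scope ring_scope.

(* Elements of L^2([0,1]) are represented by real functions on R that are
   Lebesgue-measurable on [0,1] and square integrable there. *)
Definition L2 {R : realType} (u : R -> R) : Prop :=
  measurable_fun (`[0%R, 1%R] : set R) u /\
  (\int[lebesgue_measure]_(t in (`[0%R, 1%R] : set R)) ((u t) ^+ 2)%:E < +oo)%E.

Definition inner {R : realType} (u v : R -> R) : R :=
  Rintegral lebesgue_measure (`[0%R, 1%R] : set R) (fun t => u t * v t).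

Definition F {R : realType} (t : R) : R := expR t / (1 + expR t).

Definition dev {R : realType} (y t : R) : R :=
  - y * ln (F t) - (1 - y) * ln (1 - F t).

Definition G {R : realType} (psi : R -> R) (t : R) : R :=
  Rintegral lebesgue_measure (`[0%R, t] : set R) (fun u => psi (- ln u)).

Definition phi {R : realType} (rho psi : R -> R) (y t : R) : R :=
  rho (dev y t) + G psi (F t) + G psi (1 - F t).

(* Sets of the form { f | <f, b> in E }, b in L^2, E Borel: they generate the
   (weak = Borel, L^2 being separable) sigma-algebra on L^2([0,1]). *)
Definition weak_gen {R : realType} : set (set (R -> R)) :=
  [set B | exists b : R -> R, L2 b /\
     exists E : set R, measurable E /\ B = (fun f => inner f b) @^-1` E].

Definition weak_meas {R : realType} : set (set (R -> R)) := <<s (@weak_gen R) >>.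

Definition Lobj {R : realType} {d : measure_display} {Om : measurableType d}
  (P : probability Om R) (rho psi : R -> R) (w : (R -> R) -> R)
  (X : Om -> (R -> R)) (y : Om -> R) (alpha : R) (beta : R -> R) : \bar R :=
  (\int[P]_om (phi rho psi (y om) (alpha + inner (X om) beta) * w (X om))%:E)%E.

Definition pi2 {R : realType} {d : measure_display} {Om : measurableType d}
  (P : probability Om R) (w : (R -> R) -> R) (X : Om -> (R -> R))
  (alpha : R) (beta : R -> R) (alpha0 : R) (beta0 : R -> R) : \bar R :=
  (\int[P]_om (w (X om) *
     (F (alpha + inner (X om) beta) - F (alpha0 + inner (X om) beta0)) ^+ 2)%:E)%E.

(* For y ~ Bernoulli(q) and F t = p the expected loss is
     risk q p = q rho(-ln p) + (1 - q) rho(-ln (1 - p)) + G(p) + G(1 - p).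
   Its derivative in p is (p - q) * curvature p, where
     curvature p = psi(-ln p) / p + psi(-ln (1 - p)) / (1 - p) >= A0,
   because one of p, 1 - p lies in [1/2, 1), where -ln takes values in
   (0, ln 2] and psi >= A0.  Hence p |-> risk q p - A0/2 (p - q)^2 is minimal
   at p = q.  Since phi is affine in y, conditioning on X replaces y by
   q = F(alpha0 + <X, beta0>) in L(theta), and integrating this quadratic margin
   against w gives the claim with C0 = A0/2. *)

From HB Require Import structures.
From mathcomp Require Import all_boot all_order all_algebra.
From mathcomp Require Import all_classical all_reals all_analysis.
From mathcomp Require Import ring lra measurable_realfun.

Set Implicit Arguments.
Unset Strict Implicit.
Unset Printing Implicit Defensive.

Import Order.TTheory GRing.Theory Num.Theory.
Import numFieldNormedType.Exports.
Local Open Scope classical_set_scope.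
Local Open Scope ring_scope.

Lemma derive_sign_min (R : realType) (f df : R -> R) (a b q : R) :
  (forall x, x \in `]a, b[ -> is_derive x 1 f (df x)) ->
  (forall x, x \in `]a, b[ -> 0 <= (x - q) * df x) ->
  q \in `]a, b[ -> forall p, p \in `]a, b[ -> f q <= f p.
Proof.
move=> fdf sign; rewrite !in_itv /= => /andP[aq qb] p /andP[ap pb].
have mvt u v : a < u -> u < v -> v < b ->
    exists2 c, 0 <= (c - q) * df c /\ u < c < v & f v - f u = df c * (v - u).
  move=> au uv vb.
  have sub x : u <= x <= v -> x \in `]a, b[.
    by move=> /andP[ux xv]; rewrite in_itv /= (lt_le_trans au) // (le_lt_trans xv).
  have fdf' x : x \in `]u, v[ -> is_derive x 1 f (df x).
    by rewrite in_itv /= => /andP[ux xv]; apply/fdf/sub; rewrite !ltW.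
  have fcont : {within `[u, v], continuous f}.
    apply: derivable_within_continuous => x; rewrite in_itv /= => xuv.
    by have [] := fdf x (sub x xuv).
  have [c] := MVT uv fdf' fcont.
  rewrite in_itv /= => /andP[uc cv] e; exists c => //; split; last by rewrite uc.
  by apply/sign/sub; rewrite !ltW.
have [pq|qp|<-] := ltgtP p q; last by [].
- have [c [sc /andP[_ cq]] e] := mvt p q ap pq qb.
  have dc : df c <= 0 by rewrite -(nmulr_rge0 _ (_ : c - q < 0)) ?subr_lt0.
  by rewrite -subr_le0 e mulr_le0_ge0 // subr_ge0 ltW.
- have [c [sc /andP[qc _]] e] := mvt q p aq qp pb.
  have dc : 0 <= df c by rewrite -(pmulr_rge0 _ (_ : 0 < c - q)) ?subr_gt0.
  by rewrite -subr_ge0 e mulr_ge0 // subr_ge0 ltW.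
Qed.

Lemma is_derive_reflect (R : realType) (f : R -> R) (p df : R) :
  is_derive (1 - p) 1 f df -> is_derive p 1 (fun x => f (1 - x)) (- df).
Proof.
move=> fdf; have one_sub : is_derive p 1 (fun x : R => 1 - x) (-1).
  by apply: is_derive_eq; rewrite add0r mul1r.
by have := @is_derive1_comp _ f (fun x => 1 - x) p _ _ fdf one_sub; rewrite mulrN1.
Qed.

Lemma F_gt0 (R : realType) (t : R) : 0 < F t.
Proof. by rewrite /F divr_gt0 ?addr_gt0 ?expR_gt0. Qed.

Lemma F_lt1 (R : realType) (t : R) : F t < 1.
Proof. by rewrite /F ltr_pdivrMr ?addr_gt0 ?expR_gt0 // mul1r ltrDr. Qed.

Lemma continuous_F (R : realType) : continuous (@F R).
Proof.
move=> t; apply: continuousM; first exact: continuous_expR.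
apply: continuousV; first by rewrite gt_eqF ?addr_gt0 ?expR_gt0.
by apply: continuousD; [exact: cst_continuous | exact: continuous_expR].
Qed.

Section G_integral.
Variables (R : realType) (psi : R -> R) (Mp : R).
Hypothesis psi_cont : {within `[0, +oo[, continuous psi}.
Hypothesis psi_ge0 : forall t : R, 0 <= t -> 0 <= psi t.
Hypothesis psi_le : forall t : R, 0 <= t -> `|psi t| <= Mp.

Lemma psi_continuous_pos t : 0 < t -> {for t, continuous psi}.
Proof.
move=> t0; have [psi_open _] := (continuous_within_itvcyP 0 psi).1 psi_cont.
by apply: psi_open; rewrite in_itv /= andbT.
Qed.

Let neg_ln_ge0 (u : R) : u \in `[0, 1] -> 0 <= - ln u.
Proof. by rewrite in_itv /= => /andP[_ u1]; rewrite oppr_ge0 ln_le0. Qed.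

Lemma integrable_psi_neg_ln :
  lebesgue_measure.-integrable (`[0, 1] : set R) (EFin \o (fun u => psi (- ln u))).
Proof.
apply: measurable_bounded_integrable.
- exact: measurable_itv.
- by have := @lebesgue_measure_itv R `[0, 1]; rewrite /= lte01 => ->; exact: ltry.
- apply: (@measurable_comp _ _ _ _ _ _ (`[0, +oo[ : set R) psi _ (fun u => - ln u)) => //.
  + by move=> _ [u /neg_ln_ge0 u0 <-]; rewrite /= in_itv /= andbT.
  + exact: subspace_continuous_measurable_fun.
  + by apply: measurable_funTS; apply: measurable_funN; exact: measurable_ln.
- exists Mp; split; first exact: num_real.
  by move=> M /ltW MpM u /neg_ln_ge0 /psi_le /le_trans; apply.
Qed.

Lemma is_derive_G (p : R) : 0 < p < 1 -> is_derive p 1 (G psi) (psi (- ln p)).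
Proof.
move=> /andP[p0 p1].
have cont : {for p, continuous (fun u => psi (- ln u))}.
  apply: continuous_comp; first exact/continuousN/continuous_ln.
  by apply: psi_continuous_pos; rewrite oppr_gt0 ln_lt0 ?p0.
have [dG G'] := continuous_FTC1_closed p1 integrable_psi_neg_ln p0 cont.
by rewrite -G' derive1E; exact: derivableP dG.
Qed.

Lemma G_ge0 (x : R) : 0 <= x <= 1 -> 0 <= G psi x.
Proof.
move=> /andP[_ x1]; apply: Rintegral_ge0 => u; rewrite /= in_itv /= => /andP[u0 ux].
by apply/psi_ge0/neg_ln_ge0; rewrite in_itv /= u0 (le_trans ux).
Qed.

Lemma G_le (x : R) : 0 <= x <= 1 -> G psi x <= Mp.
Proof.
move=> /andP[x0 x1]; have Mp_ge0 : 0 <= Mp := le_trans (normr_ge0 _) (psi_le (lexx 0)).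
have sub : (`[0, x] : set R) `<=` `[0, 1] by apply: subset_itvl; rewrite bnd_simp.
have fin : (lebesgue_measure (`[0%R, x] : set R) < +oo)%E.
  by rewrite lebesgue_measure_itv; case: ifP => _; rewrite ltry.
apply: (@le_trans _ _ (\int[lebesgue_measure]_(u in (`[0, x] : set R)) Mp)).
  apply: le_Rintegral => //.
  - exact: integrableS integrable_psi_neg_ln.
  - by apply: measurable_bounded_integrable => //; exact: bounded_cst.
  - move=> u; rewrite /= in_itv /= => /andP[u0 ux]; apply: le_trans (ler_norm _) _.
    by apply/psi_le/neg_ln_ge0; rewrite in_itv /= u0 (le_trans ux).
rewrite Rintegral_cst //; have /= -> := @lebesgue_measure_itv R `[0, x].
by case: ifP => _ /=; rewrite ?mulr0 // subr0 ler_piMr.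
Qed.
End G_integral.

Section curvature.
Variables (R : realType) (psi : R -> R) (a A0 : R).
Hypothesis psi_cont : {within `[0, +oo[, continuous psi}.
Hypothesis psi_ge0 : forall t : R, 0 <= t -> 0 <= psi t.
Hypothesis ln2_le_a : ln 2 <= a.
Hypothesis psi_gt_A0 : forall t : R, 0 < t < a -> A0 < psi t.

Lemma psi_ge_A0 t : 0 < t <= ln 2 -> A0 <= psi t.
Proof.
move=> /andP[t0 tln2].
apply: (cvgr_to_ge (cvg_at_left_filter (psi_continuous_pos psi_cont t0))).
near=> s; apply/ltW/psi_gt_A0; apply/andP; split.
  by near: s; exact: nbhs_left_gt.
by apply: lt_le_trans (le_trans tln2 ln2_le_a); near: s; exact: nbhs_left_lt.
Unshelve. all: by end_near. Qed.

Lemma psi_neg_ln_div_ge0 c : 0 < c <= 1 -> 0 <= psi (- ln c) / c.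
Proof.
move=> /andP[c0 c1]; apply: divr_ge0; last exact: ltW.
by apply: psi_ge0; rewrite oppr_ge0 ln_le0.
Qed.

Lemma psi_neg_ln_div_ge c : 1/2 <= c < 1 -> A0 <= psi (- ln c) / c.
Proof.
move=> /andP[c2 c1]; have c0 : 0 < c by apply: lt_le_trans c2; lra.
have psiA0 : A0 <= psi (- ln c).
  apply: psi_ge_A0; rewrite oppr_gt0 ln_lt0 ?c0 //= -lnV ?posrE //.
  by rewrite ler_ln ?posrE ?invr_gt0 // -[c^-1]mul1r ler_pdivrMr //; lra.
apply: le_trans psiA0 _; rewrite ler_pdivlMr //.
by apply: ler_piMr; [apply: psi_ge0; rewrite oppr_ge0 ln_le0 // | ]; exact: ltW.
Qed.

Definition curvature p := psi (- ln p) / p + psi (- ln (1 - p)) / (1 - p).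

Lemma curvature_ge p : 0 < p < 1 -> A0 <= curvature p.
Proof.
rewrite /curvature => /andP[p0 p1]; have [p2|p2] := leP (1/2) p.
  have : A0 <= psi (- ln p) / p by apply: psi_neg_ln_div_ge; rewrite p2 p1.
  have : 0 <= psi (- ln (1 - p)) / (1 - p).
    by apply: psi_neg_ln_div_ge0; apply/andP; split; lra.
  lra.
have : 0 <= psi (- ln p) / p by apply: psi_neg_ln_div_ge0; rewrite p0 ltW.
have : A0 <= psi (- ln (1 - p)) / (1 - p).
  by apply: psi_neg_ln_div_ge; apply/andP; split; lra.
lra.
Qed.
End curvature.

Section risk.
Variables (R : realType) (rho psi : R -> R) (Mr Mp a A0 : R).
Hypothesis rho_le : forall t : R, 0 <= t -> `|rho t| <= Mr.
Hypothesis rho_psi : forall t : R, 0 < t -> is_derive t 1 rho (psi t).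
Hypothesis psi_cont : {within `[0, +oo[, continuous psi}.
Hypothesis psi_le : forall t : R, 0 <= t -> `|psi t| <= Mp.
Hypothesis psi_ge0 : forall t : R, 0 <= t -> 0 <= psi t.
Hypothesis ln2_le_a : ln 2 <= a.
Hypothesis psi_gt_A0 : forall t : R, 0 < t < a -> A0 < psi t.

Definition risk (q p : R) : R :=
  q * rho (- ln p) + (1 - q) * rho (- ln (1 - p)) + G psi p + G psi (1 - p).

Lemma is_derive_rho_neg_ln (p : R) : 0 < p < 1 ->
  is_derive p 1 (fun x => rho (- ln x)) (- (psi (- ln p) / p)).
Proof.
move=> /andP[p0 p1]; have neg_ln := is_deriveN (is_derive1_ln p0).
have rho_ln : is_derive (- ln p) 1 rho (psi (- ln p)).
  by apply: rho_psi; rewrite oppr_gt0 ln_lt0 ?p0.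
by have := @is_derive1_comp _ rho (fun x => - ln x) p _ _ rho_ln neg_ln; rewrite mulrN.
Qed.

Lemma is_derive_risk (q p : R) : 0 < p < 1 ->
  is_derive p 1 (risk q) ((p - q) * curvature psi p).
Proof.
move=> p01; have p01' : 0 < 1 - p < 1.
  by move: p01 => /andP[p0 p1]; apply/andP; split; lra.
have dA := is_derive_rho_neg_ln p01.
have dB := is_derive_reflect (is_derive_rho_neg_ln p01').
have dG := is_derive_G psi_cont psi_le p01.
have dG' := is_derive_reflect (is_derive_G psi_cont psi_le p01').
have := is_deriveD (is_deriveD (is_deriveD (is_deriveZ q dA) (is_deriveZ (1 - q) dB)) dG) dG'.
move=> /(@is_derive_eq _ _ _ (risk q)); apply.
move: p01 => /andP[p0 p1]; rewrite /curvature /GRing.scale /=.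
by field; rewrite subr_eq0 !gt_eqF.
Qed.

Lemma excess_risk_ge (q p : R) : 0 < q < 1 -> 0 < p < 1 ->
  A0 / 2 * (p - q) ^+ 2 <= risk q p - risk q q.
Proof.
move=> q01 p01.
pose f x := risk q x - A0 / 2 * (x - q) ^+ 2.
suff : f q <= f p by rewrite /f subrr expr0n /= mulr0 subr0; lra.
apply: (derive_sign_min (df := fun x => (x - q) * (curvature psi x - A0)) (a := 0) (b := 1)).
- move=> x; rewrite in_itv /= => x01.
  have dsq : is_derive x 1 (fun x => (x - q) ^+ 2) (2 * (x - q)).
    by apply: is_derive_eq; rewrite /GRing.scale /=; ring.
  have := is_deriveB (is_derive_risk q x01) (is_deriveZ (A0 / 2) dsq).
  move=> /(@is_derive_eq _ _ _ f); apply.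
  by rewrite /GRing.scale /=; field.
- move=> x; rewrite in_itv /= => x01; rewrite mulrA -expr2.
  by rewrite mulr_ge0 ?sqr_ge0 // subr_ge0 (curvature_ge psi_cont psi_ge0 ln2_le_a psi_gt_A0).
- by rewrite in_itv.
by rewrite in_itv.
Qed.

Lemma continuous_risk (q p : R) : 0 < p < 1 -> {for p, continuous (risk q)}.
Proof.
move=> p01; apply: differentiable_continuous; rewrite -derivable1_diffP.
by have [] := is_derive_risk q p01.
Qed.

Lemma continuous_risk_F (q : R) : continuous (fun t => risk q (F t)).
Proof.
move=> t; apply: continuous_comp; first exact: continuous_F.
by apply: continuous_risk; rewrite F_gt0 F_lt1.
Qed.

Lemma risk_affine (q p : R) : risk q p = risk 0 p + q * (risk 1 p - risk 0 p).
Proof. by rewrite /risk; ring. Qed.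

Lemma norm_risk_le (q p : R) : 0 <= q <= 1 -> 0 < p < 1 ->
  `|risk q p| <= Mr + (Mp + Mp).
Proof.
move=> /andP[q0 q1] p01.
have p01' : 0 < 1 - p < 1 by case/andP: p01 => p0 p1; apply/andP; split; lra.
have rho_neg_ln (x : R) : 0 < x < 1 -> - Mr <= rho (- ln x) <= Mr.
  by case/andP=> x0 x1; rewrite -ler_norml rho_le // oppr_ge0 ln_le0 ?ltW.
have G01 (x : R) : 0 < x < 1 -> 0 <= G psi x <= Mp.
  by case/andP=> x0 x1; rewrite G_ge0 ?G_le ?ltW.
move: (rho_neg_ln _ p01) (rho_neg_ln _ p01') (G01 _ p01) (G01 _ p01').
move=> /andP[? ?] /andP[? ?] /andP[? ?] /andP[? ?].
by rewrite /risk ler_norml; apply/andP; split; nra.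
Qed.

Lemma phi_risk (y t : R) : y = 0 \/ y = 1 -> phi rho psi y t = risk y (F t).
Proof.
rewrite /phi /risk /dev => -[] ->;
  by rewrite !(mul0r, mul1r, subr0, subrr, add0r, addr0, oppr0, mulN1r).
Qed.
End risk.

Lemma integrable_bounded d (Om : measurableType d) (R : realType)
    (P : probability Om R) (f : Om -> R) (M : R) :
  measurable_fun setT f -> (forall om, `|f om| <= M) -> P.-integrable setT (EFin \o f).
Proof.
move=> mf fM; apply: measurable_bounded_integrable => //.
  exact: le_lt_trans (probability_le1 P measurableT) (ltry _).
exists M; split; first exact: num_real.
by move=> x /ltW Mx om _; exact: le_trans (fM om) Mx.
Qed.

Section conditioning.
Context {d dT : measure_display} {Om : measurableType d} {T : measurableType dT}
  {R : realType}.
Variables (P : probability Om R) (X : Om -> T) (c1 c2 : Om -> R).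
Hypothesis mX : measurable_fun setT X.
Hypothesis mc1 : measurable_fun setT c1.
Hypothesis mc2 : measurable_fun setT c2.
Hypothesis c1_ge0 : forall om, 0 <= c1 om.
Hypothesis c2_ge0 : forall om, 0 <= c2 om.
Hypothesis c1_le1 : forall om, c1 om <= 1.
Hypothesis c2_le1 : forall om, c2 om <= 1.
Hypothesis eq_integral_preimage : forall A, measurable A ->
  (\int[P]_(om in X @^-1` A) (c1 om)%:E = \int[P]_(om in X @^-1` A) (c2 om)%:E)%E.

Let measurable_preimage A : measurable A -> measurable (X @^-1` A).
Proof. by move=> mA; rewrite -[X @^-1` A]setTI; exact: mX. Qed.

Let eq_integral_indic A : measurable A ->
  (\int[P]_om (c1 om * \1_(X @^-1` A) om)%:E =
   \int[P]_om (c2 om * \1_(X @^-1` A) om)%:E)%E.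
Proof.
move=> mA; have := eq_integral_preimage mA.
rewrite [LHS]integral_mkcond [RHS]integral_mkcond !epatch_indic => e.
by under eq_integral do rewrite EFinM; under [RHS]eq_integral do rewrite EFinM.
Qed.

Import HBNNSimple.

Let measurable_level_set (s : {nnsfun T >-> R}) r : measurable (X @^-1` (s @^-1` [set r])).
Proof.
by apply/measurable_preimage; rewrite -[_ @^-1` _]setTI; exact: measurable_funPT.
Qed.

Let integral_nnsfun_decomp (c : Om -> R) (s : {nnsfun T >-> R}) :
  measurable_fun setT c -> (forall om, 0 <= c om) ->
  (\int[P]_om (c om * s (X om))%:E =
   \sum_(r \in range s) r%:E * \int[P]_om (c om * \1_(X @^-1` (s @^-1` [set r])) om)%:E)%E.
Proof.
move=> mc c0.
have s_ge0 r : r \in range s -> 0 <= r by move=> /set_mem[t _ <-].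
have ms0 r : r < 0 -> X @^-1` (s @^-1` [set r]) = set0.
  by move=> r0; rewrite preimage_nnfun0 ?preimage_set0.
transitivity (\sum_(r \in range s)
    \int[P]_om (r * (c om * \1_(X @^-1` (s @^-1` [set r])) om))%:E)%E.
  rewrite -ge0_integral_fsum //.
  - apply: eq_integral => om _; rewrite fsumEFin //; congr EFin.
    rewrite (fimfunE s (X om)) fsbig_distrr //; apply: eq_fsbigr => r _.
    by rewrite mulrCA !indicE.
  - move=> r; apply/measurable_EFinP; apply: measurable_funM => //.
    by apply: measurable_funM => //; exact: measurable_indic.
  - move=> r om _; rewrite lee_fin; have [r0|r0] := ltP r 0.
      by rewrite ms0 // indic0 !mulr0.
    by rewrite !mulr_ge0.
apply: eq_fsbigr => r /s_ge0 r0; rewrite -ge0_integralZl_EFin //.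
- by move=> om _; rewrite lee_fin mulr_ge0.
- apply/measurable_EFinP; apply: measurable_funM => //; exact: measurable_indic.
Qed.

Lemma eq_integral_comp_nnsfun (s : {nnsfun T >-> R}) :
  (\int[P]_om (c1 om * s (X om))%:E = \int[P]_om (c2 om * s (X om))%:E)%E.
Proof.
rewrite !integral_nnsfun_decomp //; apply: eq_fsbigr => r _.
by rewrite eq_integral_indic.
Qed.

Lemma eq_integral_comp_ge0 (k : T -> R) :
  measurable_fun setT k -> (forall x, 0 <= k x) ->
  (\int[P]_om (c1 om * k (X om))%:E = \int[P]_om (c2 om * k (X om))%:E)%E.
Proof.
move=> mk k0; have mEk : measurable_fun setT (EFin \o k) by exact/measurable_EFinP.
pose s := nnsfun_approx measurableT mEk.
suff approx (c : Om -> R) : measurable_fun setT c -> (forall om, 0 <= c om) ->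
    (\int[P]_om (c om * k (X om))%:E =
     limn (fun n => \int[P]_om (c om * s n (X om))%:E))%E.
  rewrite (approx c1) // (approx c2) //.
  by under eq_fun do rewrite eq_integral_comp_nnsfun.
move=> mc c0; rewrite -monotone_convergence //.
- apply: eq_integral => om _; apply/esym/cvg_lim => //.
  have sk : (EFin \o s^~ (X om)) @ \oo --> (k (X om))%:E.
    by apply: cvg_nnsfun_approx => // x _; rewrite lee_fin.
  by rewrite EFinM; under eq_fun do rewrite EFinM; exact: cvgeZl.
- move=> n; apply/measurable_EFinP; apply: measurable_funM => //.
  exact: measurableT_comp (measurable_funPT (s n)) mX.
- by move=> n om _; rewrite lee_fin mulr_ge0.
- move=> om _ m n mn; rewrite lee_fin ler_wpM2l //.
  by have /lefP := nd_nnsfun_approx measurableT mEk mn; apply.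
Qed.

Lemma eq_integral_comp_bounded (k : T -> R) (M : R) :
  measurable_fun setT k -> (forall x, `|k x| <= M) ->
  (\int[P]_om (c1 om * k (X om))%:E = \int[P]_om (c2 om * k (X om))%:E)%E.
Proof.
move=> mk kM; have M0 : 0 <= M by apply: le_trans (kM point).
have kM_ge0 x : 0 <= k x + M by have := kM x; rewrite ler_norml; lra.
have mkM : measurable_fun setT (fun x => k x + M) by exact: measurable_funD.
suff shift (c : Om -> R) : measurable_fun setT c ->
    (forall om, 0 <= c om) -> (forall om, c om <= 1) ->
    (\int[P]_om (c om * k (X om))%:E = \int[P]_om (c om * (k (X om) + M))%:E
                                     - \int[P]_om (c om * M)%:E)%E.
  rewrite shift // [RHS]shift // (eq_integral_comp_ge0 mkM kM_ge0).
  by rewrite (eq_integral_comp_ge0 (measurable_cst M) (fun=> M0)).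
move=> mc c0 cle1; have mckX : measurable_fun setT (fun om => c om * (k (X om) + M)).
  exact/measurable_funM/(measurableT_comp mkM mX).
rewrite -integralB_EFin //.
- by apply: eq_integral => om _; rewrite -EFinB; congr EFin; ring.
- apply: (@integrable_bounded _ _ _ P _ (M + M)) => // om.
  rewrite normrM !ger0_norm // -[M + M]mul1r ler_pM //.
  by have := kM (X om); rewrite ler_norml; lra.
- apply: (@integrable_bounded _ _ _ P _ M) => [|om]; first exact: measurable_funM.
  by rewrite normrM !ger0_norm // ler_piMl.
Qed.
End conditioning.

Section model.
Variables (R : realType) (d : measure_display) (Om : measurableType d).
Variables (P : probability Om R) (X : Om -> (R -> R)) (y : Om -> R).
Variables (alpha0 : R) (beta0 : R -> R) (w : (R -> R) -> R) (Mw : R).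
Variables (rho psi : R -> R) (Mr Mp a A0 : R).
Hypothesis measurable_inner_X :
  forall b, L2 b -> measurable_fun setT (fun om => inner (X om) b).
Hypothesis y01 : forall om, y om = 0 \/ y om = 1.
Hypothesis measurable_y : measurable_fun setT y.
Hypothesis L2_beta0 : L2 beta0.
Hypothesis y_cond : forall A, weak_meas A ->
  P (X @^-1` A `&` y @^-1` [set 1]) =
  (\int[P]_(om in X @^-1` A) (F (alpha0 + inner (X om) beta0))%:E)%E.
Hypothesis w_preimage : forall E : set R, measurable E -> weak_meas (w @^-1` E).
Hypothesis w_ge0 : forall f, 0 <= w f.
Hypothesis w_le : forall f, w f <= Mw.
Hypothesis rho_le : forall t : R, 0 <= t -> `|rho t| <= Mr.
Hypothesis rho_psi : forall t : R, 0 < t -> is_derive t 1 rho (psi t).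
Hypothesis psi_cont : {within `[0, +oo[, continuous psi}.
Hypothesis psi_le : forall t : R, 0 <= t -> `|psi t| <= Mp.
Hypothesis psi_ge0 : forall t : R, 0 <= t -> 0 <= psi t.
Hypothesis ln2_le_a : ln 2 <= a.
Hypothesis psi_gt_A0 : forall t : R, 0 < t < a -> A0 < psi t.

Local Notation L2weak := (g_sigma_algebraType (@weak_gen R)).

Lemma measurable_X : measurable_fun setT (X : Om -> L2weak).
Proof.
apply: measurability => //; move=> _ [_ [b [Lb [E [mE ->]]]] <-].
exact: measurable_inner_X.
Qed.

Lemma measurable_inner b : L2 b -> measurable_fun setT (fun f : L2weak => inner f b).
Proof.
move=> Lb _ E mE; rewrite setTI; apply: sub_sigma_algebra.
by exists b; split => //; exists E.
Qed.

Lemma measurable_w : measurable_fun setT (w : L2weak -> R).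
Proof. by move=> _ E mE; rewrite setTI; exact: w_preimage. Qed.

Definition cond_prob om := F (alpha0 + inner (X om) beta0).

Lemma measurable_cond_prob : measurable_fun setT cond_prob.
Proof.
apply: measurableT_comp (continuous_measurable_fun (@continuous_F R)) _.
exact: measurable_funD (measurable_cst _) (measurable_inner_X L2_beta0).
Qed.

Lemma integral_y_preimage A : weak_meas A ->
  (\int[P]_(om in X @^-1` A) (y om)%:E = \int[P]_(om in X @^-1` A) (cond_prob om)%:E)%E.
Proof.
move=> mA; have y1 : measurable (y @^-1` [set 1]).
  by rewrite -[_ @^-1` _]setTI; exact: measurable_y.
have XA : measurable (X @^-1` A) by rewrite -[_ @^-1` _]setTI; exact: measurable_X.
rewrite -y_cond // setIC -integral_indic //; apply: eq_integral => om _.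
rewrite indicE; case: (y01 om) => yom; last by rewrite yom mem_set.
by rewrite yom memNset //= yom => /eqP; rewrite eq_sym oner_eq0.
Qed.

Let cond_prob_ge0 om : 0 <= cond_prob om. Proof. exact/ltW/F_gt0. Qed.
Let cond_prob_le1 om : cond_prob om <= 1. Proof. exact/ltW/F_lt1. Qed.
Let y_ge0 om : 0 <= y om. Proof. by case: (y01 om) => ->. Qed.
Let y_le1 om : y om <= 1. Proof. by case: (y01 om) => ->. Qed.

Let Mrisk := (Mr + (Mp + Mp)) * Mw.

Let norm_risk_w_le q t f : 0 <= q <= 1 -> `|risk rho psi q (F t) * w f| <= Mrisk.
Proof.
move=> q01; rewrite /Mrisk normrM (ger0_norm (w_ge0 f)) ler_pM //.
by apply: norm_risk_le => //; rewrite F_gt0 F_lt1.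
Qed.

Section fixed_parameter.
Variables (alpha : R) (beta : R -> R).
Hypothesis L2_beta : L2 beta.

Let risk_w q (f : L2weak) := risk rho psi q (F (alpha + inner f beta)) * w f.

Let measurable_risk_w q : measurable_fun setT (risk_w q).
Proof.
apply: measurable_funM measurable_w.
have mt : measurable_fun setT (fun f : L2weak => alpha + inner f beta).
  exact: measurable_funD (measurable_cst _) (measurable_inner L2_beta).
exact: measurableT_comp
  (continuous_measurable_fun (continuous_risk_F rho_psi psi_cont psi_le (q := q))) mt.
Qed.

Let integral_risk_w (c : Om -> R) : measurable_fun setT c ->
  (forall om, 0 <= c om <= 1) ->
  (\int[P]_om (risk rho psi (c om) (F (alpha + inner (X om) beta)) * w (X om))%:E =
   \int[P]_om (risk_w 0 (X om))%:E +
   \int[P]_om (c om * (risk_w 1 (X om) - risk_w 0 (X om)))%:E)%E.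
Proof.
move=> mc c01; rewrite -integralD_EFin //.
- apply: eq_integral => om _; congr EFin; rewrite /risk_w risk_affine; ring.
- apply: (@integrable_bounded _ _ _ P _ Mrisk) => [|om].
    exact: measurableT_comp (measurable_risk_w 0) measurable_X.
  by apply: norm_risk_w_le; rewrite lexx ler01.
- apply: (@integrable_bounded _ _ _ P _ (Mrisk + Mrisk)) => [|om].
    apply: measurable_funM mc _; apply: measurable_funB;
      exact: measurableT_comp (measurable_risk_w _) measurable_X.
  have /andP[c0 c1] := c01 om.
  rewrite normrM ger0_norm // -[Mrisk + Mrisk]mul1r ler_pM //.
  by apply: le_trans (ler_normB _ _) (lerD _ _); apply: norm_risk_w_le; rewrite ?lexx ler01.
Qed.

Lemma Lobj_risk : Lobj P rho psi w X y alpha beta =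
  (\int[P]_om (risk rho psi (cond_prob om) (F (alpha + inner (X om) beta)) * w (X om))%:E)%E.
Proof.
rewrite /Lobj; under eq_integral => om _ do rewrite (phi_risk _ _ _ (y01 om)).
rewrite [LHS]integral_risk_w //; last by move=> om; rewrite y_ge0 y_le1.
rewrite [RHS]integral_risk_w //; last 2 first.
- exact: measurable_cond_prob.
- by move=> om; rewrite cond_prob_ge0 cond_prob_le1.
congr (_ + _)%E.
have := @eq_integral_comp_bounded _ _ _ L2weak _ P X y cond_prob measurable_X
  measurable_y measurable_cond_prob y_ge0 cond_prob_ge0 y_le1 cond_prob_le1
  integral_y_preimage (fun f => risk_w 1 f - risk_w 0 f) (Mrisk + Mrisk).
apply; first exact: measurable_funB.
by move=> f; apply: le_trans (ler_normB _ _) (lerD _ _); apply: norm_risk_w_le;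
  rewrite ?lexx ler01.
Qed.

Lemma integrable_risk : P.-integrable setT (EFin \o
  (fun om => risk rho psi (cond_prob om) (F (alpha + inner (X om) beta)) * w (X om))).
Proof.
apply: (@integrable_bounded _ _ _ P _ Mrisk) => [|om]; last first.
  by apply: norm_risk_w_le; rewrite cond_prob_ge0 cond_prob_le1.
have -> : (fun om => risk rho psi (cond_prob om) (F (alpha + inner (X om) beta)) * w (X om))
  = (fun om => risk_w 0 (X om) + cond_prob om * (risk_w 1 (X om) - risk_w 0 (X om))).
  by apply/funext => om; rewrite /risk_w risk_affine; ring.
apply: measurable_funD; first exact: measurableT_comp (measurable_risk_w 0) measurable_X.
apply: measurable_funM measurable_cond_prob _; apply: measurable_funB;
  exact: measurableT_comp (measurable_risk_w _) measurable_X.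
Qed.

Lemma integrable_pi2 : P.-integrable setT (EFin \o
  (fun om => w (X om) * (F (alpha + inner (X om) beta) - cond_prob om) ^+ 2)).
Proof.
apply: (@integrable_bounded _ _ _ P _ Mw) => [|om].
  apply: measurable_funM; first exact: measurableT_comp measurable_w measurable_X.
  apply: measurable_funX; apply: measurable_funB measurable_cond_prob.
  apply: measurableT_comp (continuous_measurable_fun (@continuous_F R)) _.
  exact: measurable_funD (measurable_cst _) (measurable_inner_X L2_beta).
rewrite normrM ger0_norm // -[Mw]mulr1 ler_pM // ger0_norm ?sqr_ge0 //.
have := cond_prob_ge0 om; have := cond_prob_le1 om.
have := F_gt0 (alpha + inner (X om) beta); have := F_lt1 (alpha + inner (X om) beta).
nra.
Qed.
End fixed_parameter.

Lemma Lobj_excess_ge alpha beta : L2 beta ->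
  ((A0 / 2)%:E * pi2 P w X alpha beta alpha0 beta0 <=
   Lobj P rho psi w X y alpha beta - Lobj P rho psi w X y alpha0 beta0)%E.
Proof.
move=> L2_beta; rewrite (Lobj_risk alpha L2_beta) (Lobj_risk alpha0 L2_beta0).
rewrite -integralB_EFin ?integrable_risk // /pi2 -integralZl ?integrable_pi2 //.
apply: le_integral => //.
- exact: integrableZl (integrable_pi2 alpha L2_beta).
- exact: integrableB (integrable_risk alpha L2_beta) (integrable_risk alpha0 L2_beta0).
move=> om _; rewrite -EFinM -EFinB lee_fin -mulrBl mulrCA mulrC.
have F01 (t : R) : 0 < F t < 1 by rewrite F_gt0 F_lt1.
apply: ler_wpM2r; first exact: w_ge0.
exact: excess_risk_ge rho_psi psi_cont psi_le psi_ge0 ln2_le_a psi_gt_A0 _ _ (F01 _) (F01 _).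
Qed.
End model.

Theorem lemmaA3 (R : realType) (d : measure_display) (Om : measurableType d)
  (P : probability Om R)
  (X : Om -> (R -> R)) (y : Om -> R) (alpha0 : R) (beta0 : R -> R)
  (w : (R -> R) -> R) (rho psi : R -> R) :
  (* X is a random element of L^2([0,1]) *)
  (forall om, L2 (X om)) ->
  (forall b, L2 b -> measurable_fun setT (fun om => inner (X om) b)) ->
  (* y is {0,1}-valued and y | X ~ Bernoulli(F(alpha0 + <X, beta0>)) *)
  (forall om, y om = 0 \/ y om = 1) ->
  measurable_fun setT y ->
  L2 beta0 ->
  (forall A, weak_meas A ->
     P (X @^-1` A `&` y @^-1` [set 1]) =
     (\int[P]_(om in X @^-1` A) (F (alpha0 + inner (X om) beta0))%:E)%E) ->
  (* w is a non-negative bounded (measurable) weight function *)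
  (forall E : set R, measurable E -> weak_meas (w @^-1` E)) ->
  (forall f, 0 <= w f) -> (exists M : R, forall f, w f <= M) ->
  (* (A1) *)
  (exists M : R, forall t : R, 0 <= t -> `|rho t| <= M) ->
  {within (`[0%R, +oo[ : set R), continuous rho} ->
  (forall t : R, 0 < t -> is_derive t 1 rho (psi t)) ->
  {within (`[0%R, +oo[ : set R), continuous psi} ->
  (exists M : R, forall t : R, 0 <= t -> `|psi t| <= M) ->
  rho 0 = 0 ->
  (* (A3) *)
  (forall t : R, 0 <= t -> 0 <= psi t) ->
  (exists a A0 : R, ln 2 <= a /\ 0 < A0 /\ forall t : R, 0 < t < a -> A0 < psi t) ->
  exists C0 : R, 0 < C0 /\
    forall (alpha : R) (beta : R -> R), L2 beta ->
      (Lobj P rho psi w X y alpha beta - Lobj P rho psi w X y alpha0 beta0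
        >= C0%:E * pi2 P w X alpha beta alpha0 beta0)%E.
Proof.
move=> _ inner_X y01 measurable_y L2_beta0 y_cond w_preimage w_ge0 [Mw w_le]
  [Mr rho_le] _ rho_psi psi_cont [Mp psi_le] _ psi_ge0 [a [A0 [ln2_le_a [A0_gt0 psi_gt_A0]]]].
exists (A0 / 2); split; first by rewrite divr_gt0.
move=> alpha beta L2_beta.
exact: (Lobj_excess_ge inner_X y01 measurable_y L2_beta0 y_cond w_preimage w_ge0 w_le
  rho_le rho_psi psi_cont psi_le psi_ge0 ln2_le_a psi_gt_A0 alpha L2_beta).
Qed.
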